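(* There exists a strictly decreasing function $\delta:[0,\tau_D]\to(0,1]$ with $\delta(0)=1$, depending only on $n,a^*,b_*$, such that the following holds. For any trajectory of system (5), any $t_0\ge0$, and any $i\in\mathcal V_F$, $j\in\mathcal V_L$ such that the arc $(j,i)$ belongs to $\mathcal E_{\sigma(t)}$ for all $t\in[t_0,t_0+\tau_D)$, $$|x_i(t)|_{\mathcal L(y(t))}\le\delta(t-t_0)\,|x(t_0)|_{\mathcal L(y(t_0))}+2\sqrt2\int_{t_0}^{t_0+\tau_D}|z(s)|\,ds\quad\text{for all }t\in[t_0,t_0+\tau_D].$$
   Context: Standing setup. Fix integers $n\ge 2$, $k\ge 1$, $d\ge 1$. The follower set is $\mathcal V_F=\{1,\dots,n\}$ and the leader set is $\mathcal V_L=\{\hat 1,\dots,\hat k\}$ (disjoint from $\mathcal V_F$); $\mathcal V=\mathcal V_F\cup\mathcal V_L$. The interaction topology is a time-varying digraph $\mathcal G_{\sigma(t)}=(\mathcal V,\mathcal E_{\sigma(t)})$, where $\sigma:[0,\infty)\to\mathcal P$ is a piecewise constant switching signal taking values in a finite set $\mathcal P$ of digraphs on $\mathcal V$; no arc of any of these digraphs enters a leader. An arc $(j,i)$ means that $i$ receives information from $j$. Dwell-time assumption: any two consecutive switching instants of $\sigma$ are separated by at least $\tau_D>0$. For $i\in\mathcal V_F$, $N_i(\sigma(t))=\{j\in\mathcal V_F:(j,i)\in\mathcal E_{\sigma(t)}\}$ and $L_i(\sigma(t))=\{j\in\mathcal V_L:(j,i)\in\mathcal E_{\sigma(t)}\}$.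 System (5): $\dot y_i=u_i(y,t)$ for $i=1,\dots,k$, and $\dot x_i=\sum_{j\in N_i(\sigma(t))}a_{ij}(x,y,t)(x_j-x_i)+\sum_{j\in L_i(\sigma(t))}b_{ij}(x,y,t)(y_j-x_i)+w_i(t)$ for $i=1,\dots,n$, where $x_i,y_j\in\mathbb R^d$, $x=(x_1,\dots,x_n)$, $y=(y_1,\dots,y_k)$; each $u_i(y,t)$ is continuous in $y$ and piecewise continuous in $t$; each $w_i$ is continuous; the weights $a_{ij},b_{ij}$ are continuous and satisfy $a_*\le a_{ij}(x,y,t)\le a^*$, $b_{ij}(x,y,t)\ge b_*$ for all $x,y,t$, with constants $0<a_*\le a^*$, $b_*>0$. Along a trajectory, $z(t)=(u_1(y(t),t),\dots,u_k(y(t),t),w_1(t),\dots,w_n(t))\in\mathbb R^{(n+k)d}$. Set notation: $|\cdot|$ is the Euclidean norm; for a closed convex $K\subset\mathbb R^d$, $|v|_K=\inf_{p\in K}|v-p|$; $\mathcal L(y(t))=\mathrm{co}\{y_1(t),\dots,y_k(t)\}$ (convex hull); $|x(t)|_{\mathcal L(y(t))}=\max_{i\in\mathcal V_F}|x_i(t)|_{\mathcal L(y(t))}$. *)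

From Stdlib Require Import Reals Lra List ClassicalEpsilon.
Open Scope R_scope.

(* Vertices: followers Fol i (i = 0..n-1 stands for 1..n),
   leaders Lead j (j = 0..k-1 stands for \hat 1 .. \hat k). *)
Inductive vertex : Type := Fol (i : nat) | Lead (j : nat).

Fixpoint rsum (m : nat) (f : nat -> R) : R :=
  match m with O => 0 | S m' => rsum m' f + f m' end.

Fixpoint maxR (m : nat) (f : nat -> R) : R :=
  match m with O => 0 | S m' => Rmax (maxR m' f) (f m') end.

(* vectors of R^d are functions nat -> R, components 0..d-1 *)
Definition vnorm2 (d : nat) (v : nat -> R) : R := rsum d (fun l => v l * v l).
Definition vnorm (d : nat) (v : nat -> R) : R := sqrt (vnorm2 d v).

Definition hull (d k : nat) (Y : nat -> nat -> R) (p : nat -> R) : Prop :=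
  exists lam : nat -> R,
    (forall j, (j < k)%nat -> 0 <= lam j) /\ rsum k lam = 1 /\
    (forall l, (l < d)%nat -> p l = rsum k (fun j => lam j * Y j l)).

(* |v|_K = inf_{p in K} |v - p|  (defined as 0 when K is empty) *)
Definition negdists (d : nat) (v : nat -> R) (K : (nat -> R) -> Prop) (r : R) : Prop :=
  exists p, K p /\ r = - vnorm d (fun l => v l - p l).

Lemma negdists_bound d v K : bound (negdists d v K).
Proof.
  exists 0. intros r [p [_ ->]]. unfold vnorm.
  pose proof (sqrt_pos (vnorm2 d (fun l => v l - p l))). lra.
Qed.

Definition setdist (d : nat) (v : nat -> R) (K : (nat -> R) -> Prop) : R :=
  match excluded_middle_informative (exists r, negdists d v K r) with
  | left H => - proj1_sig (completeness _ (negdists_bound d v K) H)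
  | right _ => 0
  end.

Definition hdist (d k : nat) (Y : nat -> nat -> R) (v : nat -> R) : R :=
  setdist d v (hull d k Y).

Definition maxdist (n d k : nat) (X Y : nat -> nat -> R) : R :=
  maxR n (fun i => hdist d k Y (X i)).

Definition locally_finite (S : R -> Prop) : Prop :=
  forall M, exists lst : list R, forall t, S t -> Rabs t <= M -> In t lst.

Definition cont_on (a b : R) (f : R -> R) : Prop :=
  forall t, a <= t <= b -> forall eps, 0 < eps -> exists del, 0 < del /\
    forall s, a <= s <= b -> Rabs (s - t) < del -> Rabs (f s - f t) < eps.

(* states: X i l = l-th component of x_i ; Y j l = l-th component of y_j *)
Definition close (m d : nat) (del : R) (X X' : nat -> nat -> R) : Prop :=
  forall i l, (i < m)%nat -> (l < d)%nat -> Rabs (X' i l - X i l) < del.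

Definition weight_continuous (n k d : nat)
  (A : (nat -> nat -> R) -> (nat -> nat -> R) -> R -> R) : Prop :=
  forall X Y t, 0 <= t -> forall eps, 0 < eps -> exists del, 0 < del /\
    forall X' Y' t', 0 <= t' -> Rabs (t' - t) < del ->
      close n d del X X' -> close k d del Y Y' ->
      Rabs (A X' Y' t' - A X Y t) < eps.

Definition cont_in_y (k d : nat) (U : (nat -> nat -> R) -> R -> nat -> R) : Prop :=
  forall t Y, 0 <= t -> forall l, (l < d)%nat -> forall eps, 0 < eps ->
    exists del, 0 < del /\ forall Y', close k d del Y Y' ->
      Rabs (U Y' t l - U Y t l) < eps.

(* u(y,t) piecewise continuous in t: jointly continuous at every (y,t) with
   t >= 0 outside a locally finite set of exceptional times *)
Definition pw_cont_in_t (k d : nat) (U : (nat -> nat -> R) -> R -> nat -> R) : Prop :=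
  exists D : R -> Prop, locally_finite D /\
    forall t Y, 0 <= t -> ~ D t -> forall l, (l < d)%nat -> forall eps, 0 < eps ->
      exists del, 0 < del /\ forall Y' t', 0 <= t' -> Rabs (t' - t) < del ->
        close k d del Y Y' -> Rabs (U Y' t' l - U Y t l) < eps.

(* right-hand side of the follower equation in system (5); arc (u,v) in the
   digraph G p means  G p u v = true  (v receives information from u) *)
Definition rhs_x {P : Type} (n k : nat) (G : P -> vertex -> vertex -> bool)
  (sigma : R -> P)
  (a b : nat -> nat -> (nat -> nat -> R) -> (nat -> nat -> R) -> R -> R)
  (w : nat -> R -> nat -> R) (x y : R -> nat -> nat -> R)
  (i : nat) (t : R) (l : nat) : R :=
  rsum n (fun j => if G (sigma t) (Fol j) (Fol i)
                   then a i j (x t) (y t) t * (x t j l - x t i l) else 0)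
  + rsum k (fun j => if G (sigma t) (Lead j) (Fol i)
                     then b i j (x t) (y t) t * (y t j l - x t i l) else 0)
  + w i t l.

(* (x,y) is a trajectory of system (5) on [0,T]: continuous, and satisfying the
   differential equations at every time in (0,T) outside a locally finite set *)
Definition is_trajectory {P : Type} (n k d : nat) (G : P -> vertex -> vertex -> bool)
  (sigma : R -> P)
  (a b : nat -> nat -> (nat -> nat -> R) -> (nat -> nat -> R) -> R -> R)
  (u : nat -> (nat -> nat -> R) -> R -> nat -> R) (w : nat -> R -> nat -> R)
  (T : R) (x y : R -> nat -> nat -> R) : Prop :=
  (forall i l, (i < n)%nat -> (l < d)%nat -> cont_on 0 T (fun t => x t i l)) /\
  (forall j l, (j < k)%nat -> (l < d)%nat -> cont_on 0 T (fun t => y t j l)) /\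
  exists S : R -> Prop, locally_finite S /\
    forall t, 0 < t < T -> ~ S t ->
      (forall j l, (j < k)%nat -> (l < d)%nat ->
         derivable_pt_lim (fun s => y s j l) t (u j (y t) t l)) /\
      (forall i l, (i < n)%nat -> (l < d)%nat ->
         derivable_pt_lim (fun s => x s i l) t (rhs_x n k G sigma a b w x y i t l)).

Definition dwell_time_signal {P : Type} (tauD : R) (sigma : R -> P) : Prop :=
  exists Sw : R -> Prop,
    (forall s, Sw s -> 0 <= s) /\
    (forall s1 s2, Sw s1 -> Sw s2 -> s1 < s2 -> tauD <= s2 - s1) /\
    (forall t1 t2, 0 <= t1 <= t2 -> (forall s, Sw s -> ~ (t1 <= s <= t2)) ->
       sigma t1 = sigma t2).

Definition znorm (n k d : nat) (u : nat -> (nat -> nat -> R) -> R -> nat -> R)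
  (w : nat -> R -> nat -> R) (y : R -> nat -> nat -> R) (t : R) : R :=
  sqrt (rsum k (fun j => vnorm2 d (u j (y t) t)) + rsum n (fun i => vnorm2 d (w i t))).

(* Fix the final time t.  Up to any eps > 0, the distance from
   x_i(t) to the hull of the y_j(t) is the gap, along some direction e with
   |e| <= 1, between x_i(t) and every leader (approximate separation).  Project
   the system on e; let c0 be the largest leader projection at t0, M0 the
   initial distance |x(t0)|_L(y(t0)) and Hint(s) the integral of |z| over [t0, s].
   Comparison principles for functions differentiable off a locally finite set
   give: (1) leader projections stay below c0 + Hint and each loses at most Hint;
   (2) follower projections stay below c0 + Hint + M0; (3) follower i, pulled by
   its leader neighbour at rate at least b_*, stays below c0 + Hint + delta M0,
   where delta solves delta' = n a^* - (n a^* + b_* ) delta, delta(0) = 1.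
   Comparing x_i(t) with the leader that was foremost at t0 bounds the distance
   by delta(t - t0) M0 + 2 Hint(t), and 2 <= 2 sqrt 2. *)

From Pilot Require Import Defs.
From Stdlib Require Import Reals List Lra Lia Classical ClassicalEpsilon.
From Coquelicot Require Import Coquelicot.
Open Scope R_scope.

Lemma rsum_ext m f g : (forall l, (l < m)%nat -> f l = g l) -> rsum m f = rsum m g.
Proof.
  induction m as [|m IH]; simpl; intros Hfg; auto.
  rewrite IH by (intros; apply Hfg; lia). rewrite Hfg by lia. auto.
Qed.

Lemma rsum_plus m f g : rsum m (fun l => f l + g l) = rsum m f + rsum m g.
Proof. induction m; simpl; [lra|]. rewrite IHm. lra. Qed.

Lemma rsum_scal m c f : rsum m (fun l => c * f l) = c * rsum m f.
Proof. induction m; simpl; [lra|]. rewrite IHm. lra. Qed.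

Lemma rsum_zero m : rsum m (fun _ => 0) = 0.
Proof. induction m; simpl; [lra|]. rewrite IHm. lra. Qed.

Lemma rsum_le m f g : (forall l, (l < m)%nat -> f l <= g l) -> rsum m f <= rsum m g.
Proof.
  induction m as [|m IH]; simpl; intros Hfg; [lra|].
  pose proof (Hfg m ltac:(lia)).
  assert (rsum m f <= rsum m g) by (apply IH; intros; apply Hfg; lia). lra.
Qed.

Lemma rsum_nonneg m f : (forall l, (l < m)%nat -> 0 <= f l) -> 0 <= rsum m f.
Proof. intros Hf. rewrite <- (rsum_zero m). apply rsum_le. auto. Qed.

Lemma rsum_nonpos m f : (forall l, (l < m)%nat -> f l <= 0) -> rsum m f <= 0.
Proof. intros Hf. rewrite <- (rsum_zero m). apply rsum_le. auto. Qed.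

Lemma rsum_ge_term m f j :
  (forall l, (l < m)%nat -> 0 <= f l) -> (j < m)%nat -> f j <= rsum m f.
Proof.
  induction m as [|m IH]; simpl; intros Hf Hj; [lia|].
  assert (0 <= rsum m f) by (apply rsum_nonneg; intros; apply Hf; lia).
  destruct (Nat.eq_dec j m) as [->|Hne]; [lra|].
  assert (f j <= rsum m f) by (apply IH; [intros; apply Hf|]; lia).
  pose proof (Hf m ltac:(lia)). lra.
Qed.

Lemma rsum_le_term m f j :
  (forall l, (l < m)%nat -> f l <= 0) -> (j < m)%nat -> rsum m f <= f j.
Proof.
  intros Hf Hj.
  assert (E : rsum m (fun l => -1 * f l) = - rsum m f) by (rewrite rsum_scal; ring).
  pose proof (rsum_ge_term m (fun l => -1 * f l) j) as Hge.
  assert (- f j <= - rsum m f); [|lra].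
  rewrite <- E. replace (- f j) with (-1 * f j) by ring.
  apply Hge; auto. intros l Hl. pose proof (Hf l Hl). lra.
Qed.

Lemma rsum_swap m p (f : nat -> nat -> R) :
  rsum m (fun l => rsum p (fun j => f l j)) = rsum p (fun j => rsum m (fun l => f l j)).
Proof.
  induction m; simpl; [now rewrite rsum_zero|].
  rewrite IHm, <- rsum_plus. auto.
Qed.

Lemma rsum_le_const m f K : (forall l, (l < m)%nat -> f l <= K) -> rsum m f <= INR m * K.
Proof.
  induction m as [|m IH]; cbn [rsum]; intros Hf; [simpl; lra|].
  assert (rsum m f <= INR m * K) by (apply IH; intros; apply Hf; lia).
  pose proof (Hf m ltac:(lia)). rewrite S_INR. lra.
Qed.

Lemma rsum_indic m j c :
  (j < m)%nat -> rsum m (fun l => if Nat.eqb l j then c else 0) = c.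
Proof.
  induction m as [|m IH]; simpl; intros Hj; [lia|].
  destruct (Nat.eq_dec j m) as [->|Hne].
  - rewrite Nat.eqb_refl, (rsum_ext m _ (fun _ => 0)), rsum_zero; [lra|].
    intros l Hl. destruct (Nat.eqb_spec l m); [lia|auto].
  - destruct (Nat.eqb_spec m j); [lia|]. rewrite IH by lia. lra.
Qed.

Lemma maxR_ge m f j : (j < m)%nat -> f j <= maxR m f.
Proof.
  induction m as [|m IH]; simpl; intros Hj; [lia|].
  destruct (Nat.eq_dec j m) as [->|Hne]; [apply Rmax_r|].
  eapply Rle_trans; [apply IH; lia | apply Rmax_l].
Qed.

Lemma maxR_nonneg m f : 0 <= maxR m f.
Proof. induction m; simpl; [lra|]. eapply Rle_trans; [apply IHm | apply Rmax_l]. Qed.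

Lemma argmax k (f : nat -> R) :
  (1 <= k)%nat -> exists j, (j < k)%nat /\ forall j', (j' < k)%nat -> f j' <= f j.
Proof.
  induction k as [|k IH]; intros Hk; [lia|].
  destruct (Nat.eq_dec k 0) as [->|Hk0].
  { exists 0%nat. split; [lia|]. intros j' Hj'. replace j' with 0%nat by lia. lra. }
  destruct IH as [j [Hj Hmax]]; [lia|].
  destruct (Rle_dec (f k) (f j)).
  - exists j. split; [lia|]. intros j' Hj'.
    destruct (Nat.eq_dec j' k) as [->|]; [auto | apply Hmax; lia].
  - exists k. split; [lia|]. intros j' Hj'.
    destruct (Nat.eq_dec j' k) as [->|]; [lra|]. pose proof (Hmax j' ltac:(lia)). lra.
Qed.

Definition dot (d : nat) (e v : nat -> R) : R := rsum d (fun l => e l * v l).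

Lemma vnorm2_nonneg d v : 0 <= vnorm2 d v.
Proof. apply rsum_nonneg. intros. nra. Qed.

Lemma dot_minus d e v v' : dot d e (fun l => v l - v' l) = dot d e v - dot d e v'.
Proof. unfold dot. induction d; simpl; [ring|]. rewrite IHd. ring. Qed.

Lemma dot_plus d e v v' : dot d e (fun l => v l + v' l) = dot d e v + dot d e v'.
Proof. unfold dot. induction d; simpl; [ring|]. rewrite IHd. ring. Qed.

Lemma dot_scal_l d c e v : dot d (fun l => c * e l) v = c * dot d e v.
Proof. unfold dot. rewrite <- rsum_scal. apply rsum_ext. intros; ring. Qed.

Lemma dot_amgm d e v r : 0 < r -> 2 * dot d e v <= r * vnorm2 d e + vnorm2 d v / r.
Proof.
  intros Hr. unfold dot, vnorm2. induction d as [|d IH]; simpl; [unfold Rdiv; lra|].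
  assert (0 <= (r * e d - v d) * (r * e d - v d) / r)
    by (unfold Rdiv; apply Rmult_le_pos; [apply Rle_0_sqr | left; apply Rinv_0_lt_compat; auto]).
  assert ((r * e d - v d) * (r * e d - v d) / r
          = r * (e d * e d) + (v d * v d) / r - 2 * (e d * v d)) by (field; lra).
  assert ((rsum d (fun l => v l * v l) + v d * v d) / r
          = rsum d (fun l => v l * v l) / r + v d * v d / r) by (field; lra).
  lra.
Qed.

Lemma dot_le d e v : vnorm2 d e <= 1 -> dot d e v <= vnorm d v.
Proof.
  intros He. unfold vnorm.
  pose proof (vnorm2_nonneg d v) as Hv. pose proof (vnorm2_nonneg d e).
  destruct (Req_dec (vnorm2 d v) 0) as [E|E].
  - rewrite E, sqrt_0. apply Rnot_lt_le. intros Hlt.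
    pose proof (dot_amgm d e v (dot d e v) Hlt) as Hb. rewrite E in Hb. unfold Rdiv in Hb. nra.
  - assert (Hs : 0 < sqrt (vnorm2 d v)) by (apply sqrt_lt_R0; lra).
    pose proof (dot_amgm d e v _ Hs) as Hb.
    assert (vnorm2 d v / sqrt (vnorm2 d v) = sqrt (vnorm2 d v)).
    { pattern (vnorm2 d v) at 1. rewrite <- (sqrt_sqrt (vnorm2 d v)) by lra. field. lra. }
    nra.
Qed.

Lemma dot_abs_le d e v : vnorm2 d e <= 1 -> - vnorm d v <= dot d e v.
Proof.
  intros He.
  assert (Hne : vnorm2 d (fun l => -1 * e l) <= 1)
    by (unfold vnorm2 in *; rewrite (rsum_ext d _ (fun l => e l * e l)) by (intros; ring); auto).
  pose proof (dot_le d _ v Hne) as Hle. rewrite dot_scal_l in Hle. lra.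
Qed.

Lemma vnorm2_plus_le d v v' :
  vnorm2 d (fun l => v l + v' l) <= 2 * vnorm2 d v + 2 * vnorm2 d v'.
Proof.
  unfold vnorm2. rewrite <- !rsum_scal, <- rsum_plus. apply rsum_le. intros l _.
  pose proof (Rle_0_sqr (v l - v' l)). unfold Rsqr in *. nra.
Qed.

Lemma vnorm2_expand d v g s : vnorm2 d (fun l => v l - s * g l) =
  vnorm2 d v - 2 * s * dot d v g + s * s * vnorm2 d g.
Proof. unfold vnorm2, dot. induction d; simpl; [ring|]. rewrite IHd. ring. Qed.

Lemma setdist_le d v K p : K p -> setdist d v K <= vnorm d (fun l => v l - p l).
Proof.
  intros Kp. unfold setdist.
  destruct (excluded_middle_informative _) as [H|H].
  - destruct (completeness _ _ _) as [s [Hub Hlub]]. simpl.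
    assert (- vnorm d (fun l => v l - p l) <= s) by (apply Hub; exists p; auto). lra.
  - exfalso. apply H. exists (- vnorm d (fun l => v l - p l)). exists p; auto.
Qed.

Lemma setdist_nonneg d v K : 0 <= setdist d v K.
Proof.
  unfold setdist. destruct (excluded_middle_informative _) as [H|H]; [|lra].
  destruct (completeness _ _ _) as [s [Hub Hlub]]. simpl.
  assert (s <= 0); [|lra].
  apply Hlub. intros r [p [_ ->]]. pose proof (sqrt_pos (vnorm2 d (fun l => v l - p l))).
  unfold vnorm. lra.
Qed.

Lemma setdist_approx d v K : (exists p, K p) -> forall eta, 0 < eta ->
  exists p, K p /\ vnorm d (fun l => v l - p l) < setdist d v K + eta.
Proof.
  intros [p0 Hp0] eta Heta. unfold setdist.
  destruct (excluded_middle_informative _) as [H|H].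
  - destruct (completeness _ _ _) as [s [Hub Hlub]]. simpl.
    apply NNPP. intros Hn.
    assert (s <= s - eta); [|lra].
    apply Hlub. intros r [p [Kp ->]].
    apply Rnot_lt_le. intros Hl. apply Hn. exists p. split; auto. lra.
  - exfalso. apply H. exists (- vnorm d (fun l => v l - p0 l)). exists p0; auto.
Qed.

Lemma hull_vertex d k Y j : (j < k)%nat -> hull d k Y (Y j).
Proof.
  intros Hj. exists (fun m => if Nat.eqb m j then 1 else 0). split; [|split].
  - intros m _. destruct (Nat.eqb m j); lra.
  - apply rsum_indic; auto.
  - intros l _. rewrite (rsum_ext k _ (fun m => if Nat.eqb m j then Y j l else 0)).
    + rewrite rsum_indic; auto.
    + intros m _. destruct (Nat.eqb_spec m j); subst; ring.
Qed.

Lemma hull_segment d k Y p j s : hull d k Y p -> (j < k)%nat -> 0 <= s <= 1 ->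
  hull d k Y (fun l => p l + s * (Y j l - p l)).
Proof.
  intros [lam [Hl [Hs Hp]]] Hj Hs1.
  exists (fun m => (1 - s) * lam m + s * (if Nat.eqb m j then 1 else 0)). split; [|split].
  - intros m Hm. pose proof (Hl m Hm). destruct (Nat.eqb m j); nra.
  - rewrite rsum_plus, rsum_scal, rsum_scal, rsum_indic, Hs by auto. ring.
  - intros l Hld.
    rewrite (rsum_ext k _ (fun m => (1 - s) * (lam m * Y m l)
                                  + s * (if Nat.eqb m j then Y j l else 0))).
    + rewrite rsum_plus, rsum_scal, rsum_scal, rsum_indic, <- Hp by auto. ring.
    + intros m _. destruct (Nat.eqb_spec m j); subst; ring.
Qed.

Lemma hull_dot d k Y p e c : hull d k Y p ->
  (forall j, (j < k)%nat -> dot d e (Y j) <= c) -> dot d e p <= c.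
Proof.
  intros [lam [Hl [Hs Hp]]] HY. unfold dot.
  rewrite (rsum_ext d _ (fun l => rsum k (fun j => lam j * (e l * Y j l)))).
  2:{ intros l Hld. rewrite Hp, <- rsum_scal by auto. apply rsum_ext. intros; ring. }
  rewrite rsum_swap, (rsum_ext k _ (fun j => lam j * dot d e (Y j))).
  2:{ intros j _. unfold dot. rewrite <- rsum_scal. auto. }
  apply Rle_trans with (rsum k (fun j => c * lam j)).
  - apply rsum_le. intros j Hj. rewrite Rmult_comm with (r1 := c).
    apply Rmult_le_compat_l; auto.
  - rewrite rsum_scal, Hs. lra.
Qed.

Lemma dot_le_hdist d k Y v e c : (1 <= k)%nat -> vnorm2 d e <= 1 ->
  (forall j, (j < k)%nat -> dot d e (Y j) <= c) -> dot d e v <= c + hdist d k Y v.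
Proof.
  intros Hk He HY. apply Rle_plus_epsilon. intros eta Heta.
  destruct (setdist_approx d v (hull d k Y)
              (ex_intro _ (Y 0%nat) (hull_vertex d k Y 0%nat ltac:(lia))) eta Heta)
    as [p [Hp Hpv]].
  pose proof (hull_dot d k Y p e c Hp HY).
  pose proof (dot_le d e (fun l => v l - p l) He) as Hcs. rewrite dot_minus in Hcs.
  unfold hdist. lra.
Qed.

Lemma hull_segment_bound d k Y v p j s : hull d k Y p -> (j < k)%nat -> 0 <= s <= 1 ->
  hdist d k Y v * hdist d k Y v <=
    vnorm2 d (fun l => v l - p l) - 2 * s * dot d (fun l => v l - p l) (fun l => Y j l - p l)
    + s * s * vnorm2 d (fun l => Y j l - p l).
Proof.
  intros Hp Hj Hs.
  pose proof (setdist_le d v _ _ (hull_segment d k Y p j s Hp Hj Hs)) as Hd.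
  fold (hdist d k Y v) in Hd. unfold vnorm in Hd.
  rewrite <- vnorm2_expand.
  replace (vnorm2 d _) with (vnorm2 d (fun l => v l - (p l + s * (Y j l - p l))))
    by (apply rsum_ext; intros; ring).
  pose proof (setdist_nonneg d v (hull d k Y)). fold (hdist d k Y v) in *.
  rewrite <- (sqrt_sqrt (vnorm2 d (fun l => v l - (p l + s * (Y j l - p l)))))
    by apply vnorm2_nonneg.
  apply Rmult_le_compat; auto.
Qed.

Lemma near_projection_angle d k Y v p j s eta : hull d k Y p -> (j < k)%nat -> 0 <= s <= 1 ->
  0 <= eta <= 1 -> vnorm d (fun l => v l - p l) < hdist d k Y v + eta ->
  2 * s * dot d (fun l => v l - p l) (fun l => Y j l - p l) <=
    eta * (2 * hdist d k Y v + 1) + s * s * vnorm2 d (fun l => Y j l - p l).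
Proof.
  intros Hp Hj Hs Heta Hnear.
  pose proof (hull_segment_bound d k Y v p j s Hp Hj Hs) as Hseg.
  set (D := hdist d k Y v) in *. set (r := vnorm d (fun l => v l - p l)) in *.
  assert (HD : D <= r) by (apply setdist_le; auto).
  assert (0 <= D) by apply setdist_nonneg.
  assert (vnorm2 d (fun l => v l - p l) = r * r)
    by (unfold r, vnorm; rewrite sqrt_sqrt; auto; apply vnorm2_nonneg).
  nra.
Qed.

Lemma vertex_offset_bound d k Y v p j : (j < k)%nat ->
  vnorm2 d (fun l => Y j l - p l) <=
    2 * rsum k (fun j => vnorm2 d (fun l => Y j l - v l)) + 2 * vnorm2 d (fun l => v l - p l).
Proof.
  intros Hj.
  replace (vnorm2 d (fun l => Y j l - p l))
    with (vnorm2 d (fun l => (Y j l - v l) + (v l - p l))) by (apply rsum_ext; intros; ring).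
  eapply Rle_trans; [apply vnorm2_plus_le|].
  pose proof (rsum_ge_term k (fun j => vnorm2 d (fun l => Y j l - v l)) j
                (fun j _ => vnorm2_nonneg _ _) Hj).
  lra.
Qed.

Lemma vnorm2_normalize d w : 0 < vnorm d w -> vnorm2 d (fun l => / vnorm d w * w l) = 1.
Proof.
  intros Hr.
  assert (Hw2 : vnorm2 d w = vnorm d w * vnorm d w)
    by (unfold vnorm; rewrite sqrt_sqrt; auto; apply vnorm2_nonneg).
  unfold vnorm2 at 1.
  rewrite (rsum_ext d _ (fun l => / (vnorm d w * vnorm d w) * (w l * w l))) by (intros; field; lra).
  rewrite rsum_scal. fold (vnorm2 d w). rewrite Hw2. field. lra.
Qed.

Lemma small_factor A B : 0 < A -> 0 <= B -> exists s, 0 < s <= 1 /\ s * B <= A.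
Proof.
  intros HA HB. exists (A / (A + B)). repeat split.
  - apply Rdiv_lt_0_compat; lra.
  - apply Rmult_le_reg_r with (A + B); [lra|]. unfold Rdiv.
    rewrite Rmult_assoc, Rinv_l by lra. lra.
  - apply Rmult_le_reg_r with (A + B); [lra|]. unfold Rdiv.
    replace (A * / (A + B) * B * (A + B)) with (A * B) by (field; lra). nra.
Qed.

(* When the distance D exceeds eps, e is the normalised v - p for a hull point p
   chosen so close to nearest that all the angles at p are nearly obtuse. *)
Lemma separation d k Y v : (1 <= k)%nat -> forall eps, 0 < eps ->
  exists e, vnorm2 d e <= 1 /\
    forall j, (j < k)%nat -> dot d e (Y j) <= dot d e v - hdist d k Y v + eps.
Proof.
  intros Hk eps Heps.
  set (D := hdist d k Y v).
  assert (HD0 : 0 <= D) by apply setdist_nonneg.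
  destruct (Rle_dec D eps) as [Hle|Hgt].
  { exists (fun _ => 0).
    assert (Hz : forall v', dot d (fun _ => 0) v' = 0).
    { intros v'. unfold dot. rewrite (rsum_ext d _ (fun _ => 0)) by (intros; ring).
      apply rsum_zero. }
    split.
    - change (vnorm2 d (fun _ => 0)) with (dot d (fun _ => 0) (fun _ => 0)). rewrite Hz. lra.
    - intros. rewrite !Hz. lra. }
  apply Rnot_le_lt in Hgt.
  set (Gb := 2 * rsum k (fun j => vnorm2 d (fun l => Y j l - v l)) + 2 * ((D + 1) * (D + 1))).
  assert (HGb : 0 <= Gb)
    by (unfold Gb; pose proof (rsum_nonneg k (fun j => vnorm2 d (fun l => Y j l - v l))
                                 (fun j _ => vnorm2_nonneg _ _)); nra).
  destruct (small_factor (eps * D) Gb ltac:(nra) HGb) as [s [[Hs0 Hs1] HsG]].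
  destruct (small_factor (eps * D * s) (2 * D + 1) ltac:(apply Rmult_lt_0_compat; nra) ltac:(lra))
    as [eta [[Heta0 Heta1] HeD]].
  destruct (setdist_approx d v (hull d k Y)
              (ex_intro _ (Y 0%nat) (hull_vertex d k Y 0%nat ltac:(lia))) eta Heta0)
    as [p [Hp Hpr]].
  fold (hdist d k Y v) D in Hpr.
  set (w := fun l => v l - p l) in *. set (r := vnorm d w) in *.
  assert (HrD : D <= r) by (apply setdist_le; auto).
  assert (Hw2 : vnorm2 d w = r * r) by (unfold r, vnorm; rewrite sqrt_sqrt; auto; apply vnorm2_nonneg).
  exists (fun l => / r * w l). split; [unfold r; rewrite vnorm2_normalize by (fold r; lra); lra|].
  intros j Hj.
  set (g := fun l => Y j l - p l).
  assert (HG : vnorm2 d g <= Gb).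
  { pose proof (vertex_offset_bound d k Y v p j Hj). fold w g in H. rewrite Hw2 in H.
    assert (r * r <= (D + 1) * (D + 1)) by (apply Rmult_le_compat; lra).
    unfold Gb. lra. }
  pose proof (near_projection_angle d k Y v p j s eta Hp Hj ltac:(lra) ltac:(lra) Hpr) as Hangle.
  fold w g D in Hangle.
  assert (Hwg : dot d w g <= eps * D)
    by (assert (s * s * vnorm2 d g <= s * (eps * D)) by (pose proof (vnorm2_nonneg d g); nra); nra).
  assert (E : dot d w (Y j) = dot d w v - dot d w w + dot d w g).
  { transitivity (dot d w (fun l => (v l - w l) + g l)).
    - unfold dot. apply rsum_ext. intros; unfold g, w; ring.
    - rewrite dot_plus, dot_minus. ring. }
  rewrite !dot_scal_l, E. change (dot d w w) with (vnorm2 d w). rewrite Hw2.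
  assert (/ r * dot d w g <= eps).
  { apply Rmult_le_reg_l with r; [lra|]. rewrite <- Rmult_assoc, Rinv_r by lra. nra. }
  assert (/ r * (r * r) = r) by (field; lra).
  fold D. nra.
Qed.

Lemma cont_on_const p q c : cont_on p q (fun _ => c).
Proof.
  intros t Ht eps He. exists 1. split; [lra|]. intros.
  unfold Rminus. rewrite Rplus_opp_r, Rabs_R0. auto.
Qed.

Lemma cont_on_plus p q f g : cont_on p q f -> cont_on p q g -> cont_on p q (fun t => f t + g t).
Proof.
  intros Hf Hg t Ht eps He.
  destruct (Hf t Ht (eps / 2) ltac:(lra)) as [d1 [Hd1 H1]].
  destruct (Hg t Ht (eps / 2) ltac:(lra)) as [d2 [Hd2 H2]].
  exists (Rmin d1 d2). split; [apply Rmin_glb_lt; auto|].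
  intros s Hs Hst. pose proof (Rmin_l d1 d2). pose proof (Rmin_r d1 d2).
  pose proof (H1 s Hs ltac:(lra)) as E1. pose proof (H2 s Hs ltac:(lra)) as E2.
  apply Rabs_def2 in E1. apply Rabs_def2 in E2. apply Rabs_def1; lra.
Qed.

Lemma cont_on_scal p q c f : cont_on p q f -> cont_on p q (fun t => c * f t).
Proof.
  intros Hf t Ht eps He.
  assert (Hc : 0 < Rabs c + 1) by (pose proof (Rabs_pos c); lra).
  destruct (Hf t Ht (eps / (Rabs c + 1)) ltac:(apply Rdiv_lt_0_compat; lra)) as [d1 [Hd1 H1]].
  exists d1. split; auto. intros s Hs Hst. pose proof (H1 s Hs Hst) as E.
  rewrite <- Rmult_minus_distr_l, Rabs_mult.
  pose proof (Rabs_pos c). pose proof (Rabs_pos (f s - f t)).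
  apply Rle_lt_trans with ((Rabs c + 1) * Rabs (f s - f t)); [nra|].
  apply Rmult_lt_reg_l with (/ (Rabs c + 1)); [apply Rinv_0_lt_compat; lra|].
  rewrite <- Rmult_assoc, Rinv_l by lra. unfold Rdiv in E. lra.
Qed.

Lemma cont_on_ext p q f g :
  (forall t, p <= t <= q -> f t = g t) -> cont_on p q f -> cont_on p q g.
Proof.
  intros Hfg Hf t Ht eps He. destruct (Hf t Ht eps He) as [del [Hd Hs]].
  exists del. split; auto. intros s Hs' Hst. rewrite <- !Hfg by auto. auto.
Qed.

Lemma cont_on_minus p q f g : cont_on p q f -> cont_on p q g -> cont_on p q (fun t => f t - g t).
Proof.
  intros Hf Hg. apply (cont_on_ext p q (fun t => f t + -1 * g t)); [intros; ring|].
  apply cont_on_plus; auto. apply cont_on_scal; auto.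
Qed.

Lemma cont_on_sub a b p q f : cont_on a b f -> a <= p -> q <= b -> cont_on p q f.
Proof.
  intros H Hp Hq t Ht eps He. destruct (H t ltac:(lra) eps He) as [del [Hd Hs]].
  exists del. split; auto. intros s Hs' Hst. apply Hs; auto. lra.
Qed.

Lemma cont_on_rsum p q m (F : nat -> R -> R) : (forall l, (l < m)%nat -> cont_on p q (F l)) ->
  cont_on p q (fun t => rsum m (fun l => F l t)).
Proof.
  induction m as [|m IH]; intros H; simpl; [apply cont_on_const|].
  apply (cont_on_plus p q (fun t => rsum m (fun l => F l t)) (F m)).
  - apply IH; intros; apply H; lia.
  - apply H; lia.
Qed.

Lemma cont_on_dot p q d e (X : R -> nat -> R) :
  (forall l, (l < d)%nat -> cont_on p q (fun r => X r l)) -> cont_on p q (fun r => dot d e (X r)).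
Proof.
  intros H. unfold dot. apply (cont_on_rsum p q d (fun l r => e l * X r l)).
  intros l Hl. apply cont_on_scal. auto.
Qed.

Lemma cont_on_of_pt p q f : (forall x, p <= x <= q -> continuity_pt f x) -> cont_on p q f.
Proof.
  intros H t Ht eps He. destruct (H t Ht eps He) as [del [Hd Hs]].
  exists del. split; auto. intros s Hs' Hst. destruct (Req_dec s t) as [->|E].
  - unfold Rminus. rewrite Rplus_opp_r, Rabs_R0. auto.
  - apply (Hs s). split; [split; [constructor | auto] | exact Hst].
Qed.

Lemma cont_pt_of_cont_on a b f x : cont_on a b f -> a < x < b -> continuity_pt f x.
Proof.
  intros H Hx eps He. destruct (H x ltac:(lra) eps He) as [del [Hd Hs]].
  set (r := Rmin del (Rmin (x - a) (b - x))).
  assert (0 < r) by (repeat apply Rmin_glb_lt; lra).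
  exists r. split; auto.
  intros s [_ Hs']. unfold R_dist in *.
  pose proof (Rmin_l del (Rmin (x - a) (b - x))). pose proof (Rmin_r del (Rmin (x - a) (b - x))).
  pose proof (Rmin_l (x - a) (b - x)). pose proof (Rmin_r (x - a) (b - x)).
  fold r in H1, H2. apply Rabs_def2 in Hs'. apply Hs; [lra | apply Rabs_def1; lra].
Qed.

Lemma cont_on_lt_nbhd p q f s A : cont_on p q f -> p <= s <= q -> f s < A ->
  exists del, 0 < del /\ forall c, p <= c <= q -> Rabs (c - s) < del -> f c < A.
Proof.
  intros Hf Hs HA. destruct (Hf s Hs (A - f s) ltac:(lra)) as [del [Hd Hc]].
  exists del. split; auto. intros c Hc' Hcs. pose proof (Hc c Hc' Hcs) as E.
  apply Rabs_def2 in E. lra.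
Qed.

Lemma cont_on_gt_nbhd p q f s A : cont_on p q f -> p <= s <= q -> A < f s ->
  exists del, 0 < del /\ forall c, p <= c <= q -> Rabs (c - s) < del -> A < f c.
Proof.
  intros Hf Hs HA. destruct (Hf s Hs (f s - A) ltac:(lra)) as [del [Hd Hc]].
  exists del. split; auto. intros c Hc' Hcs. pose proof (Hc c Hc' Hcs) as E.
  apply Rabs_def2 in E. lra.
Qed.

Lemma finite_min_delta N (P : nat -> R -> Prop) :
  (forall m, (m < N)%nat -> exists del, 0 < del /\ P m del) ->
  (forall m del del', 0 < del' <= del -> P m del -> P m del') ->
  exists del, 0 < del /\ forall m, (m < N)%nat -> P m del.
Proof.
  intros H Hmono. induction N as [|N IH].
  - exists 1. split; [lra|]. intros; lia.
  - destruct IH as [d1 [Hd1 H1]]; [intros; apply H; lia|].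
    destruct (H N ltac:(lia)) as [d2 [Hd2 H2]].
    assert (0 < Rmin d1 d2) by (apply Rmin_glb_lt; auto).
    pose proof (Rmin_l d1 d2). pose proof (Rmin_r d1 d2).
    exists (Rmin d1 d2). split; auto.
    intros m Hm. destruct (Nat.eq_dec m N) as [->|Hne].
    + apply Hmono with d2; [lra | auto].
    + apply Hmono with d1; [lra | apply H1; lia].
Qed.

Lemma locally_finite_union (E F : R -> Prop) :
  locally_finite E -> locally_finite F -> locally_finite (fun t => E t \/ F t).
Proof.
  intros HE HF M. destruct (HE M) as [l1 H1]. destruct (HF M) as [l2 H2].
  exists (l1 ++ l2). intros t [Et|Ft] Ht; apply in_or_app; auto.
Qed.

Lemma locally_finite_common N (Q : nat -> R -> Prop) :
  (forall m, (m < N)%nat -> exists E, locally_finite E /\ forall t, ~ E t -> Q m t) ->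
  exists E, locally_finite E /\ forall m t, (m < N)%nat -> ~ E t -> Q m t.
Proof.
  induction N as [|N IH]; intros H.
  - exists (fun _ => False). split; [|intros; lia]. intros M. exists nil. tauto.
  - destruct IH as [E1 [HE1 HQ1]]; [intros; apply H; lia|].
    destruct (H N ltac:(lia)) as [E2 [HE2 HQ2]].
    exists (fun t => E1 t \/ E2 t). split; [apply locally_finite_union; auto|].
    intros m t Hm Ht. destruct (Nat.eq_dec m N) as [->|Hne].
    + apply HQ2. tauto.
    + apply HQ1; [lia | tauto].
Qed.

Lemma locally_finite_left_gap E : locally_finite E ->
  forall s, exists h, 0 < h /\ forall c, s - h < c < s -> ~ E c.
Proof.
  intros HE s. destruct (HE (Rabs s + 1)) as [L HL].
  assert (Hgap : exists h, 0 < h /\ forall c, In c L -> c < s -> c <= s - h).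
  { clear HL. induction L as [|c0 L [h [Hh HLh]]].
    - exists 1. split; [lra|]. intros c [].
    - destruct (Rlt_dec c0 s).
      + exists (Rmin h (s - c0)). pose proof (Rmin_l h (s - c0)). pose proof (Rmin_r h (s - c0)).
        split; [apply Rmin_glb_lt; lra|].
        intros c [<-|Hc] Hcs; [lra|]. pose proof (HLh c Hc Hcs). lra.
      + exists h. split; auto. intros c [<-|Hc] Hcs; [lra | auto]. }
  destruct Hgap as [h [Hh HG]].
  exists (Rmin h 1). pose proof (Rmin_l h 1). pose proof (Rmin_r h 1).
  split; [apply Rmin_glb_lt; lra|].
  intros c Hc Ec.
  assert (In c L) by (apply HL; auto; unfold Rabs; destruct (Rcase_abs c), (Rcase_abs s); lra).
  pose proof (HG c H1 ltac:(lra)). lra.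
Qed.

Lemma left_point p s h : p < s -> 0 < h -> exists r, p < r < s /\ s - h < r.
Proof.
  intros Hps Hh. exists (Rmax ((p + s) / 2) (s - h / 2)).
  pose proof (Rmax_l ((p + s) / 2) (s - h / 2)). pose proof (Rmax_r ((p + s) / 2) (s - h / 2)).
  assert (Rmax ((p + s) / 2) (s - h / 2) < s) by (apply Rmax_lub_lt; lra).
  lra.
Qed.

Lemma cont_on_lt_nbhd_all N p q (phi : nat -> R -> R) s A :
  (forall m, (m < N)%nat -> cont_on p q (phi m)) -> p <= s <= q ->
  (forall m, (m < N)%nat -> phi m s < A) ->
  exists del, 0 < del /\ forall m c, (m < N)%nat -> p <= c <= q -> Rabs (c - s) < del -> phi m c < A.
Proof.
  intros Hc Hs HA.
  destruct (finite_min_delta N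
    (fun m del => forall c, p <= c <= q -> Rabs (c - s) < del -> phi m c < A)) as [del [Hdel Hd]].
  - intros m Hm. apply (cont_on_lt_nbhd p q); auto.
  - intros m del del' Hdd HP c Hc' Hcs. apply HP; auto. lra.
  - exists del. split; auto.
Qed.

(* Continuous induction: N continuous functions negative at p stay negative on
   [p, q] as long as none of them can reach 0 first. *)
Lemma first_crossing N p q (phi : nat -> R -> R) : p <= q ->
  (forall m, (m < N)%nat -> cont_on p q (phi m)) ->
  (forall m, (m < N)%nat -> phi m p < 0) ->
  (forall s m, p < s <= q -> (m < N)%nat -> phi m s = 0 ->
     (forall m' c, (m' < N)%nat -> p <= c < s -> phi m' c < 0) -> False) ->
  forall m t, (m < N)%nat -> p <= t <= q -> phi m t < 0.
Proof.
  intros Hpq Hc H0 Hcross.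
  set (A := fun r => p <= r <= q /\ forall m c, (m < N)%nat -> p <= c <= r -> phi m c < 0).
  assert (Ap : A p) by (split; [lra|]; intros m c Hm Hc'; replace c with p by lra; auto).
  assert (Hb : bound A) by (exists q; intros r [Hr _]; lra).
  destruct (completeness A Hb (ex_intro _ p Ap)) as [s [Hub Hlub]].
  assert (Hps : p <= s) by (apply Hub; auto).
  assert (Hsq : s <= q) by (apply Hlub; intros r [Hr _]; lra).
  (* all functions are negative on [p, s) *)
  assert (Hbefore : forall m c, (m < N)%nat -> p <= c < s -> phi m c < 0).
  { intros m c Hm Hc'. apply NNPP. intros Hn.
    assert (s <= c); [|lra]. apply Hlub. intros r [_ Ar]. apply Rnot_lt_le. intros Hrc.
    apply Hn, Ar; auto. lra. }
  (* hence, by continuity and the no-first-crossing hypothesis, also at s *)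
  assert (Hat : forall m, (m < N)%nat -> phi m s < 0).
  { intros m Hm. destruct (Req_dec s p) as [->|Hsp]; [auto|].
    destruct (Rtotal_order (phi m s) 0) as [Hlt|[Heq|Hgt]]; auto.
    - exfalso. apply (Hcross s m); auto. lra.
    - exfalso. destruct (cont_on_gt_nbhd p q (phi m) s 0 (Hc m Hm) ltac:(lra) Hgt)
        as [del [Hdel Hd]].
      destruct (left_point p s del ltac:(lra) Hdel) as [c [Hc1 Hc2]].
      pose proof (Hd c ltac:(lra) ltac:(rewrite Rabs_left; lra)).
      pose proof (Hbefore m c Hm ltac:(lra)). lra. }
  assert (As : forall m c, (m < N)%nat -> p <= c <= s -> phi m c < 0).
  { intros m c Hm Hc'. destruct (Req_dec c s) as [->|]; [auto | apply Hbefore; auto; lra]. }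
  destruct (Req_dec s q) as [<-|Hne]; [intros; apply As; auto|].
  (* if s < q, negativity persists a little beyond s, contradicting maximality *)
  exfalso.
  destruct (cont_on_lt_nbhd_all N p q phi s 0 Hc ltac:(lra) Hat) as [del [Hdel Hd]].
  assert (Hr : s < Rmin q (s + del / 2)) by (apply Rmin_glb_lt; lra).
  pose proof (Rmin_r q (s + del / 2)). pose proof (Rmin_l q (s + del / 2)).
  assert (Ar : A (Rmin q (s + del / 2))).
  { split; [lra|]. intros m c Hm Hc'. destruct (Rlt_dec c s); [apply Hbefore; auto; lra|].
    apply Hd; auto; [lra|]. rewrite Rabs_right; lra. }
  pose proof (Hub _ Ar). lra.
Qed.

Lemma left_nonincreasing (f : R -> R) r s : r < s -> cont_on r s f ->
  (forall c, r <= c < s -> exists l, derivable_pt_lim f c l /\ l <= 0) -> f s <= f r.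
Proof.
  intros Hrs Hc Hd.
  assert (Hinner : forall s', r < s' < s -> f s' <= f r).
  { intros s' Hs'.
    assert (Hder : forall x, r <= x <= s' -> exists l, is_derive f x l /\ l <= 0).
    { intros x Hx. destruct (Hd x ltac:(lra)) as [l [Hl Hl0]].
      exists l. split; auto. apply is_derive_Reals. auto. }
    destruct (MVT_gen f r s' (Derive f)) as [c [Hc1 Hc2]].
    - intros x Hx. rewrite Rmin_left, Rmax_right in Hx by lra.
      destruct (Hder x ltac:(lra)) as [l [Hl _]].
      rewrite (is_derive_unique f x l Hl). auto.
    - intros x Hx. rewrite Rmin_left, Rmax_right in Hx by lra.
      destruct (Hd x ltac:(lra)) as [l [Hl _]].
      apply derivable_continuous_pt. exists l. auto.
    - rewrite Rmin_left, Rmax_right in Hc1 by lra.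
      destruct (Hder c ltac:(lra)) as [l [Hl Hl0]].
      rewrite (is_derive_unique f c l Hl) in Hc2. nra. }
  apply Rnot_lt_le. intros Hlt.
  destruct (cont_on_gt_nbhd r s f s (f r) Hc ltac:(lra) Hlt) as [del [Hdel Hnear]].
  destruct (left_point r s del Hrs Hdel) as [c [Hc1 Hc2]].
  pose proof (Hinner c ltac:(lra)). pose proof (Hnear c ltac:(lra) ltac:(rewrite Rabs_left; lra)).
  lra.
Qed.

Lemma max_invariance N p q (f : nat -> R -> R) (E : R -> Prop) C :
  p <= q -> locally_finite E ->
  (forall m, (m < N)%nat -> cont_on p q (f m)) ->
  (forall m, (m < N)%nat -> f m p <= C) ->
  (forall eps, 0 < eps -> exists eta, 0 < eta /\
     forall m c, (m < N)%nat -> p < c < q -> ~ E c -> C < f m c ->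
       (forall m', (m' < N)%nat -> f m' c <= f m c + eta) ->
       exists l, derivable_pt_lim (f m) c l /\ l <= eps) ->
  forall m s, (m < N)%nat -> p <= s <= q -> f m s <= C.
Proof.
  intros Hpq HE Hc H0 Hder m s Hm Hs.
  apply Rle_plus_epsilon. intros x Hx.
  set (eps := x / (1 + (q - p))).
  assert (Heps : 0 < eps) by (apply Rdiv_lt_0_compat; lra).
  assert (Hepsx : eps * (1 + (q - p)) = x) by (unfold eps; field; lra).
  set (phi := fun m r => f m r - (C + eps * (1 + (r - p)))).
  enough (phi m s < 0) by (unfold phi in *; nra).
  assert (Hslack : forall c, derivable_pt_lim (fun r => C + eps * (1 + (r - p))) c eps).
  { intros c. apply is_derive_Reals. auto_derive; auto. ring. }
  assert (Hphic : forall m, (m < N)%nat -> cont_on p q (phi m)).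
  { intros m' Hm'. apply cont_on_minus; auto. apply cont_on_of_pt. intros r _.
    apply derivable_continuous_pt. exists eps. apply Hslack. }
  apply (first_crossing N p q phi); auto.
  { intros m' Hm'. pose proof (H0 m' Hm'). unfold phi. lra. }
  intros s' m' Hs' Hm' Hzero Hbefore.
  destruct (Hder eps Heps) as [eta [Heta Hd]].
  destruct (locally_finite_left_gap E HE s') as [h [Hh Hgap]].
  set (eta' := Rmin eta eps).
  assert (0 < eta') by (apply Rmin_glb_lt; auto).
  pose proof (Rmin_l eta eps). pose proof (Rmin_r eta eps). fold eta' in H1, H2.
  destruct (cont_on_gt_nbhd p q (phi m') s' (- eta') (Hphic m' Hm') ltac:(lra) ltac:(lra))
    as [del [Hdel Hnear]].
  (* a point r < s' such that [r, s') avoids E and phi m' > - eta' there *)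
  pose proof (Rmin_l h del). pose proof (Rmin_r h del).
  destruct (left_point p s' (Rmin h del) ltac:(lra) ltac:(apply Rmin_glb_lt; auto))
    as [r [Hr1 Hr2]].
  assert (Hdecr : phi m' s' <= phi m' r).
  { apply left_nonincreasing; [lra | apply (cont_on_sub p q); auto; lra |].
    intros c Hcr.
    assert (Hcnear : - eta' < phi m' c) by (apply Hnear; [lra | rewrite Rabs_left; lra]).
    destruct (Hd m' c Hm' ltac:(lra) ltac:(apply Hgap; lra)) as [l [Hl Hle]].
    - unfold phi in Hcnear. nra.
    - intros m'' Hm''. pose proof (Hbefore m'' c Hm'' ltac:(lra)). unfold phi in *. lra.
    - exists (l - eps). split; [apply derivable_pt_lim_minus; auto | lra]. }
  pose proof (Hbefore m' r Hm' ltac:(lra)). lra.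
Qed.

Lemma comparison p q (f : R -> R) (E : R -> Prop) C :
  p <= q -> locally_finite E -> cont_on p q f -> f p <= C ->
  (forall c, p < c < q -> ~ E c -> C < f c -> exists l, derivable_pt_lim f c l /\ l <= 0) ->
  forall s, p <= s <= q -> f s <= C.
Proof.
  intros Hpq HE Hc H0 Hd s Hs.
  apply (max_invariance 1 p q (fun _ => f) E C Hpq HE (fun _ _ => Hc) (fun _ _ => H0))
    with (m := 0%nat); auto.
  intros eps Heps. exists 1. split; [lra|].
  intros m c _ Hc' Ec HC _. destruct (Hd c Hc' Ec HC) as [l [Hl Hle]].
  exists l. split; auto. lra.
Qed.

Lemma derive_rsum m (F : nat -> R -> R) c (DF : nat -> R) :
  (forall l, (l < m)%nat -> derivable_pt_lim (F l) c (DF l)) ->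
  derivable_pt_lim (fun s => rsum m (fun l => F l s)) c (rsum m DF).
Proof.
  induction m as [|m IH]; intros H; simpl; [apply (derivable_pt_lim_const 0)|].
  apply (derivable_pt_lim_plus (fun s => rsum m (fun l => F l s)) (F m)).
  - apply IH; intros; apply H; lia.
  - apply H; lia.
Qed.

Lemma derive_dot d e (X : R -> nat -> R) c (DX : nat -> R) :
  (forall l, (l < d)%nat -> derivable_pt_lim (fun s => X s l) c (DX l)) ->
  derivable_pt_lim (fun s => dot d e (X s)) c (dot d e DX).
Proof.
  intros H. unfold dot. apply (derive_rsum d (fun l s => e l * X s l)).
  intros l Hl. apply (derivable_pt_lim_scal (fun s => X s l)). auto.
Qed.

Lemma RInt_sub_ex (Z : R -> R) a b s : ex_RInt Z a b -> a <= s <= b -> ex_RInt Z a s.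
Proof. intros Hex Hs. apply (@ex_RInt_Chasles_1 R_CompleteNormedModule) with b; auto. Qed.

Lemma RInt_derive (Z : R -> R) a b c : a < c < b -> ex_RInt Z a b -> continuity_pt Z c ->
  derivable_pt_lim (fun s => RInt Z a s) c (Z c).
Proof.
  intros Hc Hex Hcont. apply is_derive_Reals.
  apply (is_derive_RInt Z (fun s => RInt Z a s) a c).
  - apply (locally_interval _ c a b); simpl; try lra.
    intros y H1 H2. apply (@RInt_correct R_CompleteNormedModule).
    apply RInt_sub_ex with b; auto. lra.
  - apply continuity_pt_filterlim. auto.
Qed.

(* The running integral of an integrable function is continuous (indeed Lipschitz). *)
Lemma RInt_cont_on (Z : R -> R) a b : a <= b -> ex_RInt Z a b -> cont_on a b (fun s => RInt Z a s).
Proof.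
  intros Hab Hex.
  destruct (ex_RInt_ub Z a b Hex) as [K HK]. rewrite Rmin_left, Rmax_right in HK by lra.
  assert (HK0 : 0 <= K) by (eapply Rle_trans; [apply Rabs_pos | apply (HK a); lra]).
  assert (Hlip : forall s s', a <= s <= s' -> s' <= b ->
            Rabs (RInt Z a s' - RInt Z a s) <= K * (s' - s)).
  { intros s s' Hs Hs'.
    assert (Hss' : ex_RInt Z s s')
      by (apply (@ex_RInt_Chasles_2 R_CompleteNormedModule) with a; [lra|];
          apply RInt_sub_ex with b; auto; lra).
    assert (E : RInt Z a s' = RInt Z a s + RInt Z s s').
    { symmetry. apply (@RInt_Chasles R_CompleteNormedModule); auto.
      apply RInt_sub_ex with b; auto; lra. }
    assert (Hcancel : forall A B : R, A + B - A = B) by (intros; ring).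
    rewrite E, Hcancel.
    rewrite Rmult_comm. apply abs_RInt_le_const; auto; [lra|]. intros; apply HK; lra. }
  intros s Hs eps Heps. exists (eps / (K + 1)). split; [apply Rdiv_lt_0_compat; lra|].
  intros s' Hs' Hss.
  assert (Hd : Rabs (RInt Z a s' - RInt Z a s) <= K * Rabs (s' - s)).
  { destruct (Rle_dec s s').
    - rewrite (Rabs_right (s' - s)) by lra. apply Hlip; lra.
    - rewrite Rabs_minus_sym, (Rabs_left (s' - s)) by lra.
      replace (K * - (s' - s)) with (K * (s - s')) by ring. apply Hlip; lra. }
  eapply Rle_lt_trans; [apply Hd|].
  apply Rle_lt_trans with (K * (eps / (K + 1))); [apply Rmult_le_compat_l; lra|].
  apply Rmult_lt_reg_r with (K + 1); [lra|].
  replace (K * (eps / (K + 1)) * (K + 1)) with (K * eps) by (field; lra). nra.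
Qed.

Lemma RInt_running_le (Z : R -> R) a b t : ex_RInt Z a b -> (forall s, 0 <= Z s) ->
  a <= t <= b -> 0 <= RInt Z a t <= RInt Z a b.
Proof.
  intros Hex HZ Ht.
  assert (Htb : ex_RInt Z t b) by (apply (@ex_RInt_Chasles_2 R_CompleteNormedModule) with a; auto).
  assert (0 <= RInt Z a t) by (apply RInt_ge_0; [lra | apply RInt_sub_ex with b; auto | auto]).
  assert (0 <= RInt Z t b) by (apply RInt_ge_0; [lra | auto | auto]).
  assert (E : RInt Z a b = RInt Z a t + RInt Z t b).
  { symmetry. apply (@RInt_Chasles R_CompleteNormedModule); auto. apply RInt_sub_ex with b; auto. }
  lra.
Qed.

Section Projected_dynamics.

Variables (P : Type) (n k d : nat) (G : P -> vertex -> vertex -> bool) (sigma : R -> P)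
  (a b : nat -> nat -> (nat -> nat -> R) -> (nat -> nat -> R) -> R -> R)
  (w : nat -> R -> nat -> R) (x y : R -> nat -> nat -> R) (e : nat -> R).

Definition follower_coupling (m : nat) (c : R) : R :=
  rsum n (fun j => if G (sigma c) (Fol j) (Fol m)
                   then a m j (x c) (y c) c * (dot d e (x c j) - dot d e (x c m)) else 0).

Definition leader_coupling (m : nat) (c : R) : R :=
  rsum k (fun j => if G (sigma c) (Lead j) (Fol m)
                   then b m j (x c) (y c) c * (dot d e (y c j) - dot d e (x c m)) else 0).

Lemma rhs_dot m c : dot d e (fun l => rhs_x n k G sigma a b w x y m c l) =
  follower_coupling m c + leader_coupling m c + dot d e (w m c).
Proof.
  unfold rhs_x, follower_coupling, leader_coupling, dot at 1.
  rewrite (rsum_ext d _ (fun l =>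
      rsum n (fun j => e l * (if G (sigma c) (Fol j) (Fol m)
                              then a m j (x c) (y c) c * (x c j l - x c m l) else 0))
    + rsum k (fun j => e l * (if G (sigma c) (Lead j) (Fol m)
                              then b m j (x c) (y c) c * (y c j l - x c m l) else 0))
    + e l * w m c l)) by (intros; rewrite !rsum_scal; ring).
  rewrite !rsum_plus, !(rsum_swap d). f_equal; f_equal; apply rsum_ext; intros j _.
  - destruct (G (sigma c) (Fol j) (Fol m)).
    + rewrite <- dot_minus, <- dot_scal_l. unfold dot. apply rsum_ext. intros; ring.
    + rewrite (rsum_ext d _ (fun _ => 0)) by (intros; ring). apply rsum_zero.
  - destruct (G (sigma c) (Lead j) (Fol m)).
    + rewrite <- dot_minus, <- dot_scal_l. unfold dot. apply rsum_ext. intros; ring.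
    + rewrite (rsum_ext d _ (fun _ => 0)) by (intros; ring). apply rsum_zero.
Qed.

Lemma follower_coupling_le m c a_up A : 0 <= A ->
  (forall j, (j < n)%nat -> 0 <= a m j (x c) (y c) c <= a_up) ->
  (forall j, (j < n)%nat -> dot d e (x c j) - dot d e (x c m) <= A) ->
  follower_coupling m c <= INR n * (a_up * A).
Proof.
  intros HA Ha Hgap. apply rsum_le_const. intros j Hj.
  pose proof (Ha j Hj). pose proof (Hgap j Hj).
  destruct (G (sigma c) (Fol j) (Fol m)); [|nra].
  apply Rle_trans with (a m j (x c) (y c) c * A); [apply Rmult_le_compat_l | apply Rmult_le_compat_r]; lra.
Qed.

Lemma leader_coupling_nonpos m c :
  (forall j, (j < k)%nat -> 0 <= b m j (x c) (y c) c) ->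
  (forall j, (j < k)%nat -> dot d e (y c j) <= dot d e (x c m)) ->
  leader_coupling m c <= 0.
Proof.
  intros Hb Hbehind. apply rsum_nonpos. intros j Hj.
  pose proof (Hb j Hj). pose proof (Hbehind j Hj).
  destruct (G (sigma c) (Lead j) (Fol m)); nra.
Qed.

Lemma leader_coupling_le m c jl b_low B : (jl < k)%nat -> G (sigma c) (Lead jl) (Fol m) = true ->
  0 <= b_low -> 0 <= B ->
  (forall j, (j < k)%nat -> b_low <= b m j (x c) (y c) c) ->
  (forall j, (j < k)%nat -> dot d e (y c j) <= dot d e (x c m) - B) ->
  leader_coupling m c <= - (b_low * B).
Proof.
  intros Hjl Hedge Hb0 HB Hb Hbehind. unfold leader_coupling.
  eapply Rle_trans; [apply (rsum_le_term k _ jl); auto|].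
  - intros j Hj. pose proof (Hb j Hj). pose proof (Hbehind j Hj).
    destruct (G (sigma c) (Lead j) (Fol m)); nra.
  - rewrite Hedge. pose proof (Hb jl Hjl). pose proof (Hbehind jl Hjl). nra.
Qed.

End Projected_dynamics.

(** The contraction factor delta(s) = (c_a + b e^{-(c_a + b) s}) / (c_a + b), where
    c_a = n a^* bounds the total follower weight and b = b_* the leader weight. *)

Definition delta_fn (n : nat) (a_up b_low : R) (s : R) : R :=
  (INR n * a_up + b_low * exp (- (INR n * a_up + b_low) * s)) / (INR n * a_up + b_low).

Section Delta.

Variables (n : nat) (a_up b_low : R).
Hypothesis a_up_nonneg : 0 <= a_up.
Hypothesis b_low_pos : 0 < b_low.

Let rate_pos : 0 < INR n * a_up + b_low.
Proof. pose proof (pos_INR n). nra. Qed.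

Lemma delta_fn_zero : delta_fn n a_up b_low 0 = 1.
Proof. unfold delta_fn. rewrite Rmult_0_r, exp_0. field. lra. Qed.

Lemma delta_fn_decreasing s1 s2 : s1 < s2 -> delta_fn n a_up b_low s2 < delta_fn n a_up b_low s1.
Proof.
  intros Hs. unfold delta_fn, Rdiv. apply Rmult_lt_compat_r; [apply Rinv_0_lt_compat; lra|].
  assert (exp (- (INR n * a_up + b_low) * s2) < exp (- (INR n * a_up + b_low) * s1))
    by (apply exp_increasing; nra).
  nra.
Qed.

Lemma delta_fn_range s : 0 <= s -> 0 < delta_fn n a_up b_low s <= 1.
Proof.
  intros Hs. split.
  - unfold delta_fn. pose proof (exp_pos (- (INR n * a_up + b_low) * s)).
    pose proof (pos_INR n). apply Rdiv_lt_0_compat; nra.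
  - rewrite <- delta_fn_zero. destruct (Req_dec s 0) as [->|]; [lra|].
    left. apply delta_fn_decreasing. lra.
Qed.

Lemma delta_fn_derive t0 M0 c :
  derivable_pt_lim (fun r => delta_fn n a_up b_low (r - t0) * M0) c
    (INR n * a_up * M0 - (INR n * a_up + b_low) * (delta_fn n a_up b_low (c - t0) * M0)).
Proof.
  apply is_derive_Reals. unfold delta_fn. auto_derive; auto.
  replace (c + - t0) with (c - t0) by ring. field. lra.
Qed.

End Delta.

(** Z bounds the speeds of the leaders and the disturbances, Hint is its running
    integral from t0, and E is a locally finite set of exceptional times. *)

Section Projected_estimates.

Variables (P : Type) (n k d : nat) (G : P -> vertex -> vertex -> bool) (sigma : R -> P)
  (a b : nat -> nat -> (nat -> nat -> R) -> (nat -> nat -> R) -> R -> R)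
  (u : nat -> (nat -> nat -> R) -> R -> nat -> R) (w : nat -> R -> nat -> R)
  (x y : R -> nat -> nat -> R) (e : nat -> R) (a_up b_low t0 t1 : R)
  (Z Hint : R -> R) (E : R -> Prop).

Hypothesis t0_le_t1 : t0 <= t1.
Hypothesis a_up_nonneg : 0 <= a_up.
Hypothesis b_low_pos : 0 < b_low.
Hypothesis e_short : vnorm2 d e <= 1.
Hypothesis E_finite : locally_finite E.
Hypothesis x_cont : forall m l, (m < n)%nat -> (l < d)%nat -> cont_on t0 t1 (fun r => x r m l).
Hypothesis y_cont : forall j l, (j < k)%nat -> (l < d)%nat -> cont_on t0 t1 (fun r => y r j l).
Hypothesis y_deriv : forall c j l, t0 < c < t1 -> ~ E c -> (j < k)%nat -> (l < d)%nat ->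
  derivable_pt_lim (fun r => y r j l) c (u j (y c) c l).
Hypothesis x_deriv : forall c m l, t0 < c < t1 -> ~ E c -> (m < n)%nat -> (l < d)%nat ->
  derivable_pt_lim (fun r => x r m l) c (rhs_x n k G sigma a b w x y m c l).
Hypothesis Hint_cont : cont_on t0 t1 Hint.
Hypothesis Hint_start : Hint t0 = 0.
Hypothesis Hint_deriv : forall c, t0 < c < t1 -> ~ E c -> derivable_pt_lim Hint c (Z c).
Hypothesis u_le_Z : forall c j, (j < k)%nat -> vnorm d (u j (y c) c) <= Z c.
Hypothesis w_le_Z : forall c m, (m < n)%nat -> vnorm d (w m c) <= Z c.
Hypothesis a_range : forall c m j, t0 <= c <= t1 -> (m < n)%nat -> (j < n)%nat ->
  0 <= a m j (x c) (y c) c <= a_up.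
Hypothesis b_range : forall c m j, t0 <= c <= t1 -> (m < n)%nat -> (j < k)%nat ->
  b_low <= b m j (x c) (y c) c.

Let leader_proj_cont j : (j < k)%nat -> cont_on t0 t1 (fun r => dot d e (y r j)).
Proof. intros Hj. apply cont_on_dot. intros; apply y_cont; auto. Qed.

Let follower_proj_cont m : (m < n)%nat -> cont_on t0 t1 (fun r => dot d e (x r m)).
Proof. intros Hm. apply cont_on_dot. intros; apply x_cont; auto. Qed.

(* The speed of every leader along e is at most Z: leaders that start below c0
   stay below c0 + Hint. *)
Lemma leader_upper c0 : (forall j, (j < k)%nat -> dot d e (y t0 j) <= c0) ->
  forall j s, (j < k)%nat -> t0 <= s <= t1 -> dot d e (y s j) <= c0 + Hint s.
Proof.
  intros H0 j s Hj Hs.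
  enough (dot d e (y s j) - Hint s <= c0) by lra.
  apply (comparison t0 t1 (fun r => dot d e (y r j) - Hint r) E c0); auto.
  - apply cont_on_minus; auto.
  - rewrite Hint_start. pose proof (H0 j Hj). lra.
  - intros c Hc Ec _. exists (dot d e (u j (y c) c) - Z c). split.
    + apply derivable_pt_lim_minus; auto. apply derive_dot. intros; apply y_deriv; auto.
    + pose proof (dot_le d e (u j (y c) c) e_short). pose proof (u_le_Z c j Hj). lra.
Qed.

Lemma leader_lower j : (j < k)%nat ->
  forall s, t0 <= s <= t1 -> dot d e (y t0 j) - Hint s <= dot d e (y s j).
Proof.
  intros Hj s Hs.
  enough (- dot d e (y s j) - Hint s <= - dot d e (y t0 j)) by lra.
  apply (comparison t0 t1 (fun r => - dot d e (y r j) - Hint r) E); auto.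
  - apply cont_on_minus; auto. apply (cont_on_ext t0 t1 (fun r => -1 * dot d e (y r j)));
      [intros; ring | apply cont_on_scal; auto].
  - rewrite Hint_start. lra.
  - intros c Hc Ec _. exists (- dot d e (u j (y c) c) - Z c). split.
    + apply derivable_pt_lim_minus; auto. apply derivable_pt_lim_opp.
      apply derive_dot. intros; apply y_deriv; auto.
    + pose proof (dot_abs_le d e (u j (y c) c) e_short). pose proof (u_le_Z c j Hj). lra.
Qed.

Lemma follower_invariance c0 M0 : 0 <= M0 ->
  (forall j, (j < k)%nat -> dot d e (y t0 j) <= c0) ->
  (forall m, (m < n)%nat -> dot d e (x t0 m) <= c0 + M0) ->
  forall m s, (m < n)%nat -> t0 <= s <= t1 -> dot d e (x s m) <= c0 + Hint s + M0.
Proof.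
  intros HM0 Hlead Hfol m s Hm Hs.
  enough (dot d e (x s m) - Hint s - c0 <= M0) by lra.
  apply (max_invariance n t0 t1 (fun m r => dot d e (x r m) - Hint r - c0) E M0); auto.
  - intros m' Hm'. apply cont_on_minus; [apply cont_on_minus; auto | apply cont_on_const].
  - intros m' Hm'. rewrite Hint_start. pose proof (Hfol m' Hm'). lra.
  - intros eps Heps.
    assert (Hca : 0 <= INR n * a_up) by (pose proof (pos_INR n); nra).
    set (eta := eps / (INR n * a_up + 1)).
    assert (Heta : 0 < eta) by (apply Rdiv_lt_0_compat; lra).
    assert (Hsmall : INR n * (a_up * eta) <= eps).
    { unfold eta. replace (INR n * (a_up * (eps / (INR n * a_up + 1))))
        with (eps * (INR n * a_up / (INR n * a_up + 1))) by (field; lra).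
      assert (INR n * a_up / (INR n * a_up + 1) <= 1)
        by (apply Rmult_le_reg_r with (INR n * a_up + 1); [lra|];
            unfold Rdiv; rewrite Rmult_assoc, Rinv_l by lra; lra).
      nra. }
    exists eta. split; auto.
    intros m' c Hm' Hc Ec Hahead Hnear.
    exists (follower_coupling _ n d G sigma a x y e m' c + leader_coupling _ k d G sigma b x y e m' c
            + dot d e (w m' c) - Z c - 0). split.
    + rewrite <- rhs_dot. apply derivable_pt_lim_minus; [|apply derivable_pt_lim_const].
      apply derivable_pt_lim_minus; auto. apply derive_dot. intros; apply x_deriv; auto.
    + pose proof (follower_coupling_le _ n d G sigma a x y e m' c a_up eta
        ltac:(lra) ltac:(intros; apply a_range; auto; lra)
        ltac:(intros j Hj; pose proof (Hnear j Hj); lra)) as Hf.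
      pose proof (leader_coupling_nonpos _ k d G sigma b x y e m' c
        ltac:(intros j Hj; pose proof (b_range c m' j ltac:(lra) Hm' Hj); lra)
        ltac:(intros j Hj; pose proof (leader_upper c0 Hlead j c Hj ltac:(lra)); lra)) as Hl.
      pose proof (dot_le d e (w m' c) e_short). pose proof (w_le_Z c m' Hm').
      lra.
Qed.

Lemma follower_contraction c0 M0 i jl : 0 <= M0 -> (i < n)%nat -> (jl < k)%nat ->
  (forall c, t0 <= c < t1 -> G (sigma c) (Lead jl) (Fol i) = true) ->
  (forall j, (j < k)%nat -> dot d e (y t0 j) <= c0) ->
  (forall m, (m < n)%nat -> dot d e (x t0 m) <= c0 + M0) ->
  forall s, t0 <= s <= t1 ->
    dot d e (x s i) <= c0 + Hint s + delta_fn n a_up b_low (s - t0) * M0.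
Proof.
  intros HM0 Hi Hjl Hedge Hlead Hfol s Hs.
  set (beta := fun r => delta_fn n a_up b_low (r - t0) * M0).
  enough (dot d e (x s i) - Hint s - c0 - beta s <= 0) by (unfold beta in *; lra).
  apply (comparison t0 t1 (fun r => dot d e (x r i) - Hint r - c0 - beta r) E); auto.
  - apply cont_on_minus; [apply cont_on_minus; [apply cont_on_minus; auto | apply cont_on_const]|].
    apply cont_on_of_pt. intros r _. apply derivable_continuous_pt. eexists.
    apply delta_fn_derive; auto.
  - rewrite Hint_start. unfold beta. rewrite Rminus_diag, delta_fn_zero by auto.
    pose proof (Hfol i Hi). lra.
  - intros c Hc Ec Hahead.
    set (psi := dot d e (x c i) - Hint c - c0).
    assert (Hbeta : 0 <= beta c)
      by (unfold beta; pose proof (delta_fn_range n a_up b_low a_up_nonneg b_low_pos (c - t0)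
                                    ltac:(lra)); nra).
    assert (Hpsi : psi <= M0) by (pose proof (follower_invariance c0 M0 HM0 Hlead Hfol i c Hi ltac:(lra)); unfold psi; lra).
    exists (follower_coupling _ n d G sigma a x y e i c + leader_coupling _ k d G sigma b x y e i c
            + dot d e (w i c) - Z c - 0
            - (INR n * a_up * M0 - (INR n * a_up + b_low) * beta c)). split.
    + rewrite <- rhs_dot. apply derivable_pt_lim_minus; [|apply delta_fn_derive; auto].
      apply derivable_pt_lim_minus; [|apply derivable_pt_lim_const].
      apply derivable_pt_lim_minus; auto. apply derive_dot. intros; apply x_deriv; auto.
    + pose proof (follower_coupling_le _ n d G sigma a x y e i c a_up (M0 - psi) ltac:(lra)
        ltac:(intros; apply a_range; auto; lra)
        ltac:(intros j Hj; pose proof (follower_invariance c0 M0 HM0 Hlead Hfol j c Hj ltac:(lra));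
              unfold psi; lra)) as Hf.
      pose proof (leader_coupling_le _ k d G sigma b x y e i c jl b_low psi Hjl
        ltac:(apply Hedge; lra) ltac:(lra) ltac:(unfold beta, psi in *; lra)
        ltac:(intros; apply b_range; auto; lra)
        ltac:(intros j Hj; pose proof (leader_upper c0 Hlead j c Hj ltac:(lra)); unfold psi; lra)) as Hl.
      pose proof (dot_le d e (w i c) e_short). pose proof (w_le_Z c i Hi).
      assert (0 <= (INR n * a_up + b_low) * (psi - beta c))
        by (apply Rmult_le_pos; [pose proof (pos_INR n); nra | unfold psi; lra]).
      nra.
Qed.

Lemma projected_gap_bound M0 i jl : (1 <= k)%nat -> 0 <= M0 -> (i < n)%nat -> (jl < k)%nat ->
  (forall c, t0 <= c < t1 -> G (sigma c) (Lead jl) (Fol i) = true) ->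
  (forall m c0, (m < n)%nat -> (forall j, (j < k)%nat -> dot d e (y t0 j) <= c0) ->
     dot d e (x t0 m) <= c0 + M0) ->
  exists js, (js < k)%nat /\
    dot d e (x t1 i) - dot d e (y t1 js) <= delta_fn n a_up b_low (t1 - t0) * M0 + 2 * Hint t1.
Proof.
  intros Hk HM0 Hi Hjl Hedge Hinit.
  destruct (argmax k (fun j => dot d e (y t0 j)) Hk) as [js [Hjs Hmax]].
  exists js. split; auto.
  assert (Hfol : forall m, (m < n)%nat -> dot d e (x t0 m) <= dot d e (y t0 js) + M0)
    by (intros; apply Hinit; auto).
  pose proof (follower_contraction _ M0 i jl HM0 Hi Hjl Hedge Hmax Hfol t1 ltac:(lra)).
  pose proof (leader_lower js Hjs t1 ltac:(lra)).
  lra.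
Qed.

End Projected_estimates.

Lemma znorm_nonneg n k d u w y c : 0 <= znorm n k d u w y c.
Proof. apply sqrt_pos. Qed.

Lemma znorm_ge_u n k d u w y c j : (j < k)%nat -> vnorm d (u j (y c) c) <= znorm n k d u w y c.
Proof.
  intros Hj. apply sqrt_le_1_alt.
  pose proof (rsum_ge_term k (fun j => vnorm2 d (u j (y c) c)) j (fun _ _ => vnorm2_nonneg _ _) Hj).
  pose proof (rsum_nonneg n (fun i => vnorm2 d (w i c)) (fun _ _ => vnorm2_nonneg _ _)).
  lra.
Qed.

Lemma znorm_ge_w n k d u w y c m : (m < n)%nat -> vnorm d (w m c) <= znorm n k d u w y c.
Proof.
  intros Hm. apply sqrt_le_1_alt.
  pose proof (rsum_ge_term n (fun i => vnorm2 d (w i c)) m (fun _ _ => vnorm2_nonneg _ _) Hm).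
  pose proof (rsum_nonneg k (fun j => vnorm2 d (u j (y c) c)) (fun _ _ => vnorm2_nonneg _ _)).
  lra.
Qed.

Lemma cont_pt_rsum m (F : nat -> R -> R) c : (forall l, (l < m)%nat -> continuity_pt (F l) c) ->
  continuity_pt (fun s => rsum m (fun l => F l s)) c.
Proof.
  induction m as [|m IH]; intros H; simpl; [apply continuity_pt_const; intros ? ?; auto|].
  apply (continuity_pt_plus (fun s => rsum m (fun l => F l s)) (F m)).
  - apply IH; intros; apply H; lia.
  - apply H; lia.
Qed.

Lemma cont_pt_vnorm2 d (V : R -> nat -> R) c :
  (forall l, (l < d)%nat -> continuity_pt (fun s => V s l) c) ->
  continuity_pt (fun s => vnorm2 d (V s)) c.
Proof.
  intros H. apply (cont_pt_rsum d (fun l s => V s l * V s l)).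
  intros l Hl. apply (continuity_pt_mult (fun s => V s l) (fun s => V s l)); auto.
Qed.

Lemma close_near k d (y : R -> nat -> nat -> R) c :
  (forall j l, (j < k)%nat -> (l < d)%nat -> continuity_pt (fun s => y s j l) c) ->
  forall del, 0 < del -> exists rho, 0 < rho /\
    forall s, Rabs (s - c) < rho -> Defs.close k d del (y c) (y s).
Proof.
  intros Hy del Hdel.
  destruct (finite_min_delta k (fun j rho => forall l, (l < d)%nat ->
              forall s, Rabs (s - c) < rho -> Rabs (y s j l - y c j l) < del)) as [rho [Hrho H]].
  - intros j Hj.
    apply (finite_min_delta d (fun l rho => forall s, Rabs (s - c) < rho ->
              Rabs (y s j l - y c j l) < del)).
    + intros l Hl. destruct (Hy j l Hj Hl del Hdel) as [r [Hr Hnear]].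
      exists r. split; auto. intros s Hs. destruct (Req_dec s c) as [->|Hsc].
      * unfold Rminus. rewrite Rplus_opp_r, Rabs_R0. auto.
      * apply (Hnear s). split; [split; [constructor | auto] | exact Hs].
    + intros l r r' Hrr HP s Hs. apply HP. lra.
  - intros j r r' Hrr HP l Hl s Hs. apply HP; auto. lra.
  - exists rho. split; auto. intros s Hs j l Hj Hl. apply H; auto.
Qed.

Lemma cont_pt_along k d (U : (nat -> nat -> R) -> R -> nat -> R) (y : R -> nat -> nat -> R) c l :
  0 < c ->
  (forall j l', (j < k)%nat -> (l' < d)%nat -> continuity_pt (fun s => y s j l') c) ->
  (forall eps, 0 < eps -> exists del, 0 < del /\ forall Y' t', 0 <= t' -> Rabs (t' - c) < del ->
     Defs.close k d del (y c) Y' -> Rabs (U Y' t' l - U (y c) c l) < eps) ->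
  continuity_pt (fun s => U (y s) s l) c.
Proof.
  intros Hc Hy HU eps Heps. destruct (HU eps Heps) as [del [Hdel Hd]].
  destruct (close_near k d y c Hy del Hdel) as [rho [Hrho Hclose]].
  pose proof (Rmin_l (Rmin del rho) c). pose proof (Rmin_r (Rmin del rho) c).
  pose proof (Rmin_l del rho). pose proof (Rmin_r del rho).
  exists (Rmin (Rmin del rho) c). split; [repeat apply Rmin_glb_lt; lra|].
  intros s [_ Hs]. change (Rabs (s - c) < Rmin (Rmin del rho) c) in Hs.
  destruct (Rabs_def2 _ _ Hs).
  apply Hd; [lra | lra | apply Hclose; lra].
Qed.

Lemma trajectory_regular_times {P : Type} n k d (G : P -> vertex -> vertex -> bool) sigma a b u w T x y :
  is_trajectory n k d G sigma a b u w T x y ->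
  (forall j, (j < k)%nat -> pw_cont_in_t k d (u j)) ->
  (forall m l, (m < n)%nat -> (l < d)%nat -> forall M, cont_on 0 M (fun t => w m t l)) ->
  exists E, locally_finite E /\ forall c, 0 < c < T -> ~ E c ->
    (forall j l, (j < k)%nat -> (l < d)%nat ->
       derivable_pt_lim (fun s => y s j l) c (u j (y c) c l)) /\
    (forall m l, (m < n)%nat -> (l < d)%nat ->
       derivable_pt_lim (fun s => x s m l) c (rhs_x n k G sigma a b w x y m c l)) /\
    continuity_pt (znorm n k d u w y) c.
Proof.
  intros [_ [Hyc [S [HS Hder]]]] Hu Hw.
  destruct (locally_finite_common k (fun j t => forall Y l eps, 0 <= t -> (l < d)%nat -> 0 < eps ->
      exists del, 0 < del /\ forall Y' t', 0 <= t' -> Rabs (t' - t) < del ->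
        Defs.close k d del Y Y' -> Rabs (u j Y' t' l - u j Y t l) < eps)) as [D [HD HDu]].
  { intros j Hj. destruct (Hu j Hj) as [D [HD HDu]].
    exists D. split; [exact HD|]. intros t Dt Y l eps Ht Hl Heps. apply HDu; auto. }
  exists (fun t => S t \/ D t). split; [apply locally_finite_union; auto|].
  intros c Hc Ec.
  destruct (Hder c Hc ltac:(tauto)) as [Dy Dx].
  split; [exact Dy | split; [exact Dx |]].
  assert (Hyc' : forall j l, (j < k)%nat -> (l < d)%nat -> continuity_pt (fun s => y s j l) c)
    by (intros; apply (cont_pt_of_cont_on 0 T); auto).
  apply (continuity_pt_comp
    (fun r => rsum k (fun j => vnorm2 d (u j (y r) r)) + rsum n (fun i => vnorm2 d (w i r))) sqrt).
  - apply (continuity_pt_plus (fun r => rsum k (fun j => vnorm2 d (u j (y r) r)))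
                              (fun r => rsum n (fun i => vnorm2 d (w i r)))).
    + apply (cont_pt_rsum k (fun j r => vnorm2 d (u j (y r) r))). intros j Hj.
      apply (cont_pt_vnorm2 d (fun r l => u j (y r) r l)). intros l Hl.
      change (continuity_pt (fun s => u j (y s) s l) c).
      apply (cont_pt_along k d (u j) y c l); [lra | auto |].
      intros eps Heps. apply HDu; [exact Hj | tauto | lra | exact Hl | exact Heps].
    + apply (cont_pt_rsum n (fun i r => vnorm2 d (w i r))). intros m Hm.
      apply (cont_pt_vnorm2 d (fun r l => w m r l)). intros l Hl.
      apply (cont_pt_of_cont_on 0 (T + 1)); [apply Hw; auto | lra].
  - apply continuity_pt_sqrt.
    apply Rplus_le_le_0_compat; apply rsum_nonneg; intros; apply vnorm2_nonneg.
Qed.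

Lemma follower_distance_bound {P : Type} n k d (G : P -> vertex -> vertex -> bool) sigma a b u w
    T x y a_up b_low t0 t1 i jl :
  (1 <= k)%nat -> 0 <= a_up -> 0 < b_low -> 0 <= t0 -> t0 <= t1 -> t1 <= T ->
  (forall m j X Y c, (m < n)%nat -> (j < n)%nat -> 0 <= c -> 0 <= a m j X Y c <= a_up) ->
  (forall m j X Y c, (m < n)%nat -> (j < k)%nat -> 0 <= c -> b_low <= b m j X Y c) ->
  (forall j, (j < k)%nat -> pw_cont_in_t k d (u j)) ->
  (forall m l, (m < n)%nat -> (l < d)%nat -> forall M, cont_on 0 M (fun t => w m t l)) ->
  is_trajectory n k d G sigma a b u w T x y ->
  ex_RInt (znorm n k d u w y) t0 t1 ->
  (i < n)%nat -> (jl < k)%nat ->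
  (forall c, t0 <= c < t1 -> G (sigma c) (Lead jl) (Fol i) = true) ->
  hdist d k (y t1) (x t1 i) <=
    delta_fn n a_up b_low (t1 - t0) * maxdist n d k (x t0) (y t0)
    + 2 * RInt (znorm n k d u w y) t0 t1.
Proof.
  intros Hk Ha Hb Ht0 Ht01 HT Ha' Hb' Hu Hw Htraj HZ Hi Hjl Hedge.
  destruct (trajectory_regular_times n k d G sigma a b u w T x y Htraj Hu Hw) as [E [HE Hreg]].
  destruct Htraj as [Hxc [Hyc _]].
  set (Z := znorm n k d u w y) in *.
  set (M0 := maxdist n d k (x t0) (y t0)).
  (* every follower starts within M0 of the leaders' convex hull *)
  assert (Hinit : forall e m c0, vnorm2 d e <= 1 -> (m < n)%nat ->
            (forall j, (j < k)%nat -> dot d e (y t0 j) <= c0) -> dot d e (x t0 m) <= c0 + M0).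
  { intros e m c0 He Hm Hc0. pose proof (dot_le_hdist d k (y t0) (x t0 m) e c0 Hk He Hc0).
    pose proof (maxR_ge n (fun m => hdist d k (y t0) (x t0 m)) m Hm). unfold M0, maxdist. lra. }
  apply Rle_plus_epsilon. intros eps Heps.
  destruct (separation d k (y t1) (x t1 i) Hk eps Heps) as [e [He Hsep]].
  destruct (projected_gap_bound P n k d G sigma a b u w x y e a_up b_low t0 t1 Z
              (fun s => RInt Z t0 s) E Ht01 Ha Hb He HE) with (M0 := M0) (i := i) (jl := jl)
    as [js [Hjs Hgap]]; auto.
  - intros m l Hm Hl. apply (cont_on_sub 0 T); auto; lra.
  - intros j l Hj Hl. apply (cont_on_sub 0 T); auto; lra.
  - intros c j l Hc Ec Hj Hl. apply Hreg; auto; lra.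
  - intros c m l Hc Ec Hm Hl. apply Hreg; auto; lra.
  - apply RInt_cont_on; auto.
  - rewrite RInt_point. reflexivity.
  - intros c Hc Ec. apply RInt_derive with t1; auto. apply Hreg; auto. lra.
  - intros; apply znorm_ge_u; auto.
  - intros; apply znorm_ge_w; auto.
  - intros; apply Ha'; auto; lra.
  - intros; apply Hb'; auto; lra.
  - apply maxR_nonneg.
  - pose proof (Hsep js Hjs). lra.
Qed.

Theorem lemma9 :
  forall (n : nat) (a_up b_low : R),
    (2 <= n)%nat -> 0 < a_up -> 0 < b_low ->
  exists delta : R -> R,
    delta 0 = 1 /\
    (forall s, 0 <= s -> 0 < delta s <= 1) /\
    (forall s1 s2, 0 <= s1 -> s1 < s2 -> delta s2 < delta s1) /\
  forall (tauD : R) (k d : nat) (a_low : R) (P : Type)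
    (G : P -> vertex -> vertex -> bool) (sigma : R -> P)
    (a b : nat -> nat -> (nat -> nat -> R) -> (nat -> nat -> R) -> R -> R)
    (u : nat -> (nat -> nat -> R) -> R -> nat -> R) (w : nat -> R -> nat -> R)
    (T : R) (x y : R -> nat -> nat -> R) (t0 : R) (i j : nat),
    0 < tauD -> (1 <= k)%nat -> (1 <= d)%nat -> 0 < a_low -> a_low <= a_up ->
    (exists lP : list P, forall p, In p lP) ->
    (forall p v m, G p v (Lead m) = false) ->
    dwell_time_signal tauD sigma ->
    (forall i' j', (i' < n)%nat -> (j' < n)%nat ->
       weight_continuous n k d (a i' j') /\
       forall X Y t, 0 <= t -> a_low <= a i' j' X Y t <= a_up) ->
    (forall i' j', (i' < n)%nat -> (j' < k)%nat ->
       weight_continuous n k d (b i' j') /\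
       forall X Y t, 0 <= t -> b_low <= b i' j' X Y t) ->
    (forall j', (j' < k)%nat -> cont_in_y k d (u j') /\ pw_cont_in_t k d (u j')) ->
    (forall i' l, (i' < n)%nat -> (l < d)%nat -> forall M, cont_on 0 M (fun t => w i' t l)) ->
    is_trajectory n k d G sigma a b u w T x y ->
    0 <= t0 -> t0 + tauD <= T ->
    (i < n)%nat -> (j < k)%nat ->
    (forall t, t0 <= t < t0 + tauD -> G (sigma t) (Lead j) (Fol i) = true) ->
    forall pr : Riemann_integrable (znorm n k d u w y) t0 (t0 + tauD),
    forall t, t0 <= t <= t0 + tauD ->
      hdist d k (y t) (x t i)
        <= delta (t - t0) * maxdist n d k (x t0) (y t0)
           + 2 * sqrt 2 * RiemannInt pr.
Proof.
  intros n a_up b_low Hn Ha Hb.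
  exists (delta_fn n a_up b_low).
  split; [apply delta_fn_zero; lra|].
  split; [intros; apply delta_fn_range; lra|].
  split; [intros; apply delta_fn_decreasing; lra|].
  intros tauD k d a_low P G sigma a b u w T x y t0 i j _ Hk _ Hal Halu _ _ _ Ha' Hb' Hu Hw
    Htraj Ht0 HT Hi Hj Hedge pr t Ht.
  set (Z := znorm n k d u w y).
  assert (HZ : ex_RInt Z t0 (t0 + tauD)) by exact (ex_RInt_Reals_1 _ _ _ pr).
  (* the bound at time t, integrating |z| over [t0, t] only *)
  pose proof (follower_distance_bound n k d G sigma a b u w T x y a_up b_low t0 t i j
    Hk ltac:(lra) Hb Ht0 ltac:(lra) ltac:(lra)
    ltac:(intros m j' X Y c Hm Hj' Hc; destruct (Ha' m j' Hm Hj') as [_ Hr];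
          pose proof (Hr X Y c Hc); lra)
    ltac:(intros m j' X Y c Hm Hj' Hc; apply (Hb' m j' Hm Hj'); auto)
    ltac:(intros j' Hj'; apply Hu; auto) Hw Htraj (RInt_sub_ex Z _ _ t HZ Ht) Hi Hj
    ltac:(intros c Hc; apply Hedge; lra)) as Hbound.
  (* the running integral is at most the total one, and 1 <= sqrt 2 *)
  pose proof (RInt_running_le Z t0 (t0 + tauD) t HZ (znorm_nonneg n k d u w y) Ht).
  rewrite <- (RInt_Reals Z t0 (t0 + tauD) pr).
  assert (1 <= sqrt 2) by (rewrite <- sqrt_1; apply sqrt_le_1_alt; lra).
  fold Z in Hbound. nra.
Qed.
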